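(* Let $p$ be a self-adjoint projection of $V$ and let $\Phi_0$ and $\Phi_\lambda$ be two distinct quadrics belonging to a projection pencil associated to $p$, generated by invertible self-adjoint transformations $g_0$ and $g_\lambda$ respectively. If $x$ is a common point of $\Phi_0$ and $\Phi_\lambda$, then $\langle p(g_0(x)),g_\lambda(x)\rangle=0$; i.e. the quadrics intersect orthogonally with respect to the quadratic form of $p$.
   Context: $V$ is a real vector space of dimension $n+1$ with a fixed indefinite inner product (nondegenerate symmetric bilinear form) $\langle\cdot,\cdot\rangle$. A linear map $g$ is self-adjoint if $\langle g(x),y\rangle=\langle x,g(y)\rangle$ for all $x,y$. A projection is a linear map $p$ with $p^2=p$. A quadric is the zero set in $P(V)$ of $x\mapsto\langle x,g(x)\rangle$ for a self-adjoint $g$ (generated by $g$); its dual is given by $g^{-1}$ when $g$ is invertible. A projection pencil associated to $p$ is a maximal set of quadrics whose dual self-adjoint transformations lie in a two-dimensional subspace of the space of linear maps of $V$ that contains $p$. *)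

(* V = column vectors 'cV[R]_(n.+1) over a real field R : realType;
   linear maps of V = square matrices acting on the left. *)
From HB Require Import structures.
From mathcomp Require Import all_boot all_order all_algebra.
From mathcomp Require Import reals.
Set Implicit Arguments. Unset Strict Implicit. Unset Printing Implicit Defensive.
Import Order.TTheory GRing.Theory Num.Theory.
Local Open Scope ring_scope.

Section Defs.
Variables (R : realType) (n : nat).
Notation V := 'cV[R]_n.+1.
Notation End := 'M[R]_n.+1.

Definition ipf (B : End) (x y : V) : R := (x^T *m B *m y) 0 0.

Definition indefinite_inner_product (B : End) : Prop :=
  [/\ B^T = B, B \in unitmx,
      exists x : V, 0 < ipf B x x & exists y : V, ipf B y y < 0].

Definition self_adjoint (B : End) (g : End) : Prop :=
  forall x y : V, ipf B (g *m x) y = ipf B x (g *m y).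

Definition projection (p : End) : Prop := p *m p = p.

(* The quadric generated by g: its points are the nonzero vectors x
   (representatives of points of P(V)) with <x, g x> = 0.  This condition
   is invariant under nonzero scaling, so it describes a subset of P(V). *)
Definition quadric (B : End) (g : End) : V -> Prop :=
  fun x => x != 0 /\ ipf B x (g *m x) = 0.

(* The dual of the quadric generated by an invertible g is given by g^-1. *)
Definition dual (g : End) : End := invmx g.

(* A two-dimensional subspace W of the space of linear maps of V containing p
   (subspaces of 'M_(n.+1) encoded as in mxalgebra, via mxvec). *)
Definition pencil_space (p : End) (W : 'M[R]_(n.+1 ^ 2)) : Prop :=
  \rank W = 2%N /\ (p \in W)%MS.

Definition in_projection_pencil (B : End) (W : 'M[R]_(n.+1 ^ 2)) (g : End) : Prop :=
  [/\ self_adjoint B g, g \in unitmx & (dual g \in W)%MS].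

End Defs.

(* The inverses g0^-1, gl^-1 and p all lie in the plane W, so some nontrivial
   combination a g0^-1 + b gl^-1 + c p vanishes.  Pair it against (g0 x, gl x):
   the g0^-1 term gives <x, gl x> = 0 and, gl^-1 being self-adjoint, the gl^-1
   term gives <g0 x, x> = <x, g0 x> = 0, so c <p g0 x, gl x> = 0.  If c were 0,
   then a gl = -b g0 with a, b nonzero, and the two quadrics would coincide. *)
From HB Require Import structures.
From mathcomp Require Import all_boot all_order all_algebra.
From mathcomp Require Import reals.
Set Implicit Arguments. Unset Strict Implicit. Unset Printing Implicit Defensive.
Import Order.TTheory GRing.Theory Num.Theory.
Local Open Scope ring_scope.

Lemma rank2_dependent3 (F : fieldType) (k m : nat) (W : 'M[F]_(k, m))
    (u v w : 'rV[F]_m) :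
  (\rank W <= 2)%N -> (u <= W)%MS -> (v <= W)%MS -> (w <= W)%MS ->
  exists a b c : F, [|| a != 0, b != 0 | c != 0] /\ a *: u + b *: v + c *: w = 0.
Proof.
move=> rW uW vW wW.
pose M := \matrix_(i < 3) nth 0 [:: u; v; w] i.
have MW : (M <= W)%MS.
  by apply/row_subP => i; rewrite rowK; case: i => [[|[|[|]]]].
have : kermx M != 0.
  rewrite kermx_eq0 /row_free; apply: contraTneq rW => rM.
  by rewrite -ltnNge -rM mxrankS.
case/rowV0Pn => z /sub_kermxP zM z_neq0.
exists (z 0 0), (z 0 1), (z 0 2%:R); split.
  apply: contraNT z_neq0; rewrite !negb_or !negbK => /and3P[/eqP z0 /eqP z1 /eqP z2].
  apply/eqP/rowP => j; rewrite mxE.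
  by case: j => [[|[|[|//]]] ?]; [rewrite -z0|rewrite -z1|rewrite -z2];
    congr (z 0 _); apply/val_inj.
rewrite -{}zM mulmx_sum_row !big_ord_recr big_ord0 /= !rowK add0r.
by congr (z 0 _ *: _ + z 0 _ *: _ + z 0 _ *: _); apply/val_inj.
Qed.

Section BilinearForm.
Variables (R : realType) (n : nat) (B : 'M[R]_n.+1).
Implicit Types (x y z : 'cV[R]_n.+1) (g : 'M[R]_n.+1).

Lemma ipfDl x y z : ipf B (x + y) z = ipf B x z + ipf B y z.
Proof. by rewrite /ipf linearD /= !mulmxDl mxE. Qed.

Lemma ipfZl (a : R) x y : ipf B (a *: x) y = a * ipf B x y.
Proof. by rewrite /ipf linearZ /= -!scalemxAl mxE. Qed.

Lemma ipfZr (a : R) x y : ipf B x (a *: y) = a * ipf B x y.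
Proof. by rewrite /ipf -scalemxAr mxE. Qed.

Lemma ipf0l y : ipf B 0 y = 0.
Proof. by rewrite -(scale0r 0) ipfZl mul0r. Qed.

Lemma self_adjoint_invmx g :
  self_adjoint B g -> g \in unitmx -> self_adjoint B (invmx g).
Proof.
move=> sag ug x y.
by rewrite -{1}(mulKVmx ug y) -sag mulKVmx.
Qed.

Lemma quadricZ (a : R) g y : a != 0 -> quadric B (a *: g) y <-> quadric B g y.
Proof.
move=> a_neq0; rewrite /quadric -scalemxAl ipfZr.
split=> -[y_neq0 yy]; split=> //; last by rewrite yy mulr0.
by move/eqP: yy; rewrite mulf_eq0 (negPf a_neq0) => /eqP.
Qed.

End BilinearForm.

Lemma unitmx_neq0 (F : fieldType) (n : nat) (g : 'M[F]_n.+1) :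
  g \in unitmx -> g != 0.
Proof. by apply: contraTneq => ->; rewrite unitmxE det0 unitr0. Qed.

Lemma invmx_dependent_scale (F : fieldType) (n : nat) (g h : 'M[F]_n.+1)
    (a b : F) :
  g \in unitmx -> h \in unitmx -> (a != 0) || (b != 0) ->
  a *: invmx g + b *: invmx h = 0 ->
  [/\ a != 0, b != 0 & a *: h = - b *: g].
Proof.
move=> ug uh ab_neq0 /(congr1 (fun M => g *m M *m h)).
rewrite mulmxDr mulmxDl -!scalemxAr -!scalemxAl mulmxV // mul1mx mulmxKV //.
rewrite mulmx0 mul0mx => /eqP; rewrite addr_eq0 -scaleNr => /eqP ahbg.
have coef_eq0 : forall (c d : F) (M N : 'M[F]_n.+1),
    N \in unitmx -> c *: M = d *: N -> c = 0 -> d = 0.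
  move=> c d M N uN cMdN c0; apply/eqP; move/eqP: cMdN.
  by rewrite c0 scale0r eq_sym scaler_eq0 (negPf (unitmx_neq0 uN)) orbF.
have a0b0 : a = 0 -> b = 0.
  by move/(coef_eq0 _ _ _ _ ug ahbg)/eqP; rewrite oppr_eq0 => /eqP.
have b0a0 : b = 0 -> a = 0.
  by move=> b0; apply: (coef_eq0 _ _ _ _ uh (esym ahbg)); rewrite b0 oppr0.
split=> //.
  by apply: contraTneq ab_neq0 => a0; rewrite a0 a0b0 // eqxx.
by apply: contraTneq ab_neq0 => b0; rewrite b0 b0a0 // eqxx.
Qed.

Theorem mainTheorem2 (R : realType) (n : nat) (B : 'M[R]_n.+1)
    (p : 'M[R]_n.+1) (W : 'M[R]_(n.+1 ^ 2)) (g0 gl : 'M[R]_n.+1) (x : 'cV[R]_n.+1) :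
  indefinite_inner_product B ->
  self_adjoint B p -> projection p ->
  pencil_space p W ->
  in_projection_pencil B W g0 -> in_projection_pencil B W gl ->
  ~ (forall y : 'cV[R]_n.+1, quadric B g0 y <-> quadric B gl y) ->
  quadric B g0 x -> quadric B gl x ->
  ipf B (p *m (g0 *m x)) (gl *m x) = 0.
Proof.
move=> _ _ _ [rW pW] [sa0 u0 d0] [sal ul dl] distinct [_ q0] [_ ql].
have [a [b [c [abc_neq0 comb]]]] :
    exists a b c, [|| a != 0, b != 0 | c != 0] /\
                  a *: invmx g0 + b *: invmx gl + c *: p = 0.
  have [a [b [c [abc_neq0 e]]]] := rank2_dependent3 (eq_leq rW) d0 dl pW.
  exists a, b, c; split=> //; apply/eqP.
  by rewrite -mxvec_eq0 !linearD !linearZ; apply/eqP.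
have := congr1 (fun N => ipf B (N *m (g0 *m x)) (gl *m x)) comb.
rewrite /= !mulmxDl -!scalemxAl !ipfDl !ipfZl mul0mx ipf0l mulKmx // ql.
rewrite self_adjoint_invmx // mulKmx // sa0 q0 !mulr0 !add0r => /eqP.
rewrite mulf_eq0 => /orP[/eqP c0 | /eqP //]; case: distinct => y.
move: comb abc_neq0; rewrite c0 scale0r addr0 eqxx orbF => comb ab_neq0.
have [a_neq0 b_neq0 ab] := invmx_dependent_scale u0 ul ab_neq0 comb.
by rewrite -(quadricZ B gl y a_neq0) ab quadricZ // oppr_eq0.
Qed.
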